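(* Let $G$ be a finitely generated group of exponential growth with finite generating set $A$, $S=A\cup A^{-1}$, and let $\psi:L\to G$ be an arbitrary bijection from a language $L\subseteq S^*$ onto $G$. Then there is a constant $\lambda_1>0$ such that, with $B_n=\{g\in G: d_A(g)\le n\}$ and $Q'_n=\{g\in B_n: \lambda_1 d_A(g)\le|\psi^{-1}(g)|\}$, one has $\lim_{n\to\infty}\#Q'_n/\#B_n=1$, and for every $g\in Q'_n$, writing $w=\psi^{-1}(g)$, $d_A(\pi(w),\psi(w))\le(1+1/\lambda_1)|w|$.
   Context: $\pi:S^*\to G$ is the evaluation map and $d_A$ the word metric of $\Gamma(G,A)$, $d_A(g)=d_A(e,g)$. Exponential growth means there is $\lambda>1$ with $\#B_n\ge\lambda^n$ for all large $n$. *)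

From Stdlib Require Import Reals Lra Lia List Classical ClassicalEpsilon.
Import ListNotations.
Open Scope R_scope.

Record group_laws (G : Type) (mul : G -> G -> G) (inv : G -> G) (e : G) : Prop := {
  gl_assoc : forall x y z, mul x (mul y z) = mul (mul x y) z;
  gl_idl   : forall x, mul e x = x;
  gl_invl  : forall x, mul (inv x) x = e }.

Definition inS {G : Type} (inv : G -> G) (A : list G) (x : G) : Prop :=
  exists a, In a A /\ (x = a \/ x = inv a).

Definition is_word {G : Type} (inv : G -> G) (A : list G) (w : list G) : Prop :=
  Forall (inS inv A) w.

Definition eval {G : Type} (mul : G -> G -> G) (e : G) (w : list G) : G :=
  fold_right mul e w.

Definition generates {G : Type} (mul : G -> G -> G) (inv : G -> G) (e : G) (A : list G) : Prop :=
  forall g, exists w, is_word inv A w /\ eval mul e w = g.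

Definition is_wordlen {G : Type} (mul : G -> G -> G) (inv : G -> G) (e : G) (A : list G)
  (g : G) (n : nat) : Prop :=
  (exists w, is_word inv A w /\ length w = n /\ eval mul e w = g) /\
  (forall w, is_word inv A w -> eval mul e w = g -> (n <= length w)%nat).

(* d_A(g) = d_A(e,g) (well-defined when A generates G) *)
Definition dA {G : Type} (mul : G -> G -> G) (inv : G -> G) (e : G) (A : list G) (g : G) : nat :=
  epsilon (inhabits 0%nat) (is_wordlen mul inv e A g).

Definition wdist {G : Type} (mul : G -> G -> G) (inv : G -> G) (e : G) (A : list G) (x y : G) : nat :=
  dA mul inv e A (mul (inv x) y).

Definition ball {G : Type} (mul : G -> G -> G) (inv : G -> G) (e : G) (A : list G)
  (n : nat) (g : G) : Prop := (dA mul inv e A g <= n)%nat.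

Definition card_is {T : Type} (P : T -> Prop) (k : nat) : Prop :=
  exists l : list T, NoDup l /\ length l = k /\ forall x, In x l <-> P x.

Definition exp_growth {G : Type} (mul : G -> G -> G) (inv : G -> G) (e : G) (A : list G) : Prop :=
  exists lam : R, 1 < lam /\ exists N : nat, forall n : nat, (N <= n)%nat ->
    forall b, card_is (ball mul inv e A n) b -> lam ^ n <= INR b.

(* For lam1 = 1/K, a group element g of the ball B_n falls outside Q'_n only
   if its psi-preimage has length below d_A(g)/K <= n/K; these preimages are
   pairwise distinct words of length at most n/K, so there are at most
   (#S+1)^(n/K) such g.  Choosing K with lam^K >= 2(#S+1), exponential growth
   gives #B_n >= lam^n >= (2(#S+1))^(n/K), hence #(B_n \ Q'_n)/#B_n <= 2^-(n/K).
   The distance bound is the triangle inequality d(pi w, g) <= d(pi w) + d(g)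
   together with d(pi w) <= |w| and d(g) <= K |w| for g in Q'_n. *)

From Stdlib Require Import Reals List Lia Lra Wf_nat Classical ClassicalEpsilon.
Import ListNotations.
Open Scope R_scope.

Section GroupFacts.

Variables (G : Type) (mul : G -> G -> G) (inv : G -> G) (e : G).
Hypothesis HG : group_laws G mul inv e.

Lemma mul_inv_r x : mul x (inv x) = e.
Proof.
  destruct HG as [mulA mul1g mulVg].
  transitivity (mul (mul (inv (inv x)) (inv x)) (mul x (inv x))).
  { now rewrite mulVg, mul1g. }
  rewrite <- mulA, (mulA (inv x) x (inv x)), mulVg, mul1g. apply mulVg.
Qed.

Lemma mul_e_r x : mul x e = x.
Proof.
  destruct HG as [mulA mul1g mulVg].
  rewrite <- (mulVg x), mulA, mul_inv_r. apply mul1g.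
Qed.

Lemma inv_inv x : inv (inv x) = x.
Proof.
  destruct HG as [mulA mul1g mulVg].
  rewrite <- (mul_e_r (inv (inv x))), <- (mulVg x), mulA, mulVg. apply mul1g.
Qed.

Lemma inv_unique_l u x : mul u x = e -> u = inv x.
Proof.
  destruct HG as [mulA mul1g _]. intros Hux.
  rewrite <- (mul_e_r u), <- (mul_inv_r x), mulA, Hux. apply mul1g.
Qed.

Lemma eval_app (u v : list G) : eval mul e (u ++ v) = mul (eval mul e u) (eval mul e v).
Proof.
  destruct HG as [mulA mul1g _].
  induction u as [|a u IH]; simpl; [now rewrite mul1g|]. rewrite IH. apply mulA.
Qed.

Lemma eval_rev_map_inv (w : list G) : eval mul e (rev (map inv w)) = inv (eval mul e w).
Proof.
  apply inv_unique_l. destruct HG as [mulA mul1g mulVg].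
  induction w as [|a w IH]; simpl; [apply mul1g|].
  rewrite eval_app; simpl. rewrite mul_e_r, <- mulA, (mulA (inv a)), mulVg, mul1g.
  exact IH.
Qed.

End GroupFacts.

Fixpoint words_upto {T : Type} (S : list T) (m : nat) : list (list T) :=
  match m with
  | O => [[]]
  | S m => [] :: flat_map (fun a => map (cons a) (words_upto S m)) S
  end.

Lemma In_words_upto {T : Type} (S : list T) m w :
  In w (words_upto S m) <-> Forall (fun x => In x S) w /\ (length w <= m)%nat.
Proof.
  revert w; induction m as [|m IH]; intros w; simpl.
  - split.
    + intros [<-|[]]. simpl; auto.
    + intros [_ Hw]. destruct w; simpl in *; [auto|lia].
  - rewrite in_flat_map. split.
    + intros [<-|[a [Ha Hw]]]; [simpl; split; auto; lia|].
      apply in_map_iff in Hw. destruct Hw as [w' [<- Hw']].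
      apply IH in Hw'. destruct Hw'. simpl. split; auto. lia.
    + intros [HF Hl]. destruct w as [|a w]; auto. right.
      inversion HF; subst. exists a. split; auto. apply in_map_iff.
      exists w; split; auto. apply IH. simpl in Hl. split; auto; lia.
Qed.

Lemma length_words_upto {T : Type} (S : list T) m :
  (length (words_upto S m) <= (length S + 1) ^ m)%nat.
Proof.
  induction m as [|m IH]; simpl; auto.
  rewrite (flat_map_constant_length (c := length (words_upto S m)))
    by (intros; apply length_map).
  pose proof (Nat.pow_nonzero (length S + 1) m ltac:(lia)).
  nia.
Qed.

Lemma length_le_of_injection {T U : Type} (f : T -> U) (l : list T) (l' : list U) :
  NoDup l -> (forall x y, In x l -> In y l -> f x = f y -> x = y) ->
  (forall x, In x l -> In (f x) l') -> (length l <= length l')%nat.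
Proof.
  intros Hl Hinj Hin. rewrite <- (length_map f).
  apply NoDup_incl_length.
  - apply NoDup_map_NoDup_ForallPairs; auto.
  - intros y Hy. apply in_map_iff in Hy. destruct Hy as [x [<- Hx]]. auto.
Qed.

Definition classic_eq_dec {T : Type} : forall x y : T, {x = y} + {x <> y} :=
  fun x y => excluded_middle_informative (x = y).

Definition asbool (P : Prop) : bool :=
  if excluded_middle_informative P then true else false.

Lemma asboolP (P : Prop) : asbool P = true <-> P.
Proof. unfold asbool. destruct excluded_middle_informative; split; auto; discriminate. Qed.

Lemma least_nat_exists (P : nat -> Prop) :
  (exists n, P n) -> exists n, P n /\ forall m, P m -> (n <= m)%nat.
Proof.
  intros HP.
  destruct (dec_inh_nat_subset_has_unique_least_element P (fun n => classic (P n)) HP)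
    as [n [Hn _]].
  eauto.
Qed.

Lemma pow_ge_eventually x b : 1 < x -> exists N, forall n, (N <= n)%nat -> b <= x ^ n.
Proof.
  intros Hx. destruct (Pow_x_infinity x ltac:(rewrite Rabs_pos_eq; lra) b) as [N HN].
  exists N. intros n Hn. specialize (HN n Hn).
  rewrite Rabs_pos_eq in HN by (apply pow_le; lra). lra.
Qed.

Lemma pow_div_le x lam K n : 0 <= x -> 1 <= lam -> x <= lam ^ K -> x ^ (n / K) <= lam ^ n.
Proof.
  intros Hx Hlam HxK.
  apply Rle_trans with ((lam ^ K) ^ (n / K)); [apply pow_incr; lra|].
  rewrite <- pow_mult. apply Rle_pow; [exact Hlam|apply Nat.Div0.mul_div_le].
Qed.

Lemma complement_ratio_lt (b q c : nat) eps : (q + c = b)%nat -> 0 < INR b ->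
  INR c / INR b < eps -> Rabs (INR q / INR b - 1) < eps.
Proof.
  intros <- Hb Hlt. rewrite plus_INR in *.
  replace (INR q / (INR q + INR c) - 1) with (- (INR c / (INR q + INR c))) by (field; lra).
  rewrite Rabs_Ropp, Rabs_pos_eq; auto.
  apply Rmult_le_pos; [apply pos_INR|apply Rlt_le, Rinv_0_lt_compat, Hb].
Qed.

Section WordMetric.

Variables (G : Type) (mul : G -> G -> G) (inv : G -> G) (e : G).
Hypothesis HG : group_laws G mul inv e.
Variable A : list G.
Hypothesis Hgen : generates mul inv e A.

Definition letters : list G := A ++ map inv A.

Lemma is_word_letters w : is_word inv A w <-> Forall (fun x => In x letters) w.
Proof.
  assert (Hx : forall x, inS inv A x <-> In x letters).
  { intros x; unfold letters; rewrite in_app_iff, in_map_iff; split.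
    - intros [a [Ha [->| ->]]]; eauto.
    - intros [Hx|[a [<- Ha]]]; [exists x|exists a]; auto. }
  unfold is_word; split; apply Forall_impl; apply Hx.
Qed.

Lemma is_word_rev_map_inv w : is_word inv A w -> is_word inv A (rev (map inv w)).
Proof.
  intros Hw. apply Forall_rev, Forall_map.
  eapply Forall_impl; [|exact Hw].
  intros x [a [Ha [->| ->]]]; exists a; split; auto.
  left; apply (inv_inv G mul inv e HG).
Qed.

Lemma dA_spec g : is_wordlen mul inv e A g (dA mul inv e A g).
Proof.
  unfold dA. apply epsilon_spec.
  destruct (Hgen g) as [w [Hw Hev]].
  destruct (least_nat_exists
              (fun n => exists w, is_word inv A w /\ length w = n /\ eval mul e w = g))
    as [n [Hn Hmin]]; [exists (length w); eauto|].
  exists n. split; auto.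
  intros w' Hw' Hev'. apply Hmin. eauto.
Qed.

Lemma dA_eval_le w : is_word inv A w -> (dA mul inv e A (eval mul e w) <= length w)%nat.
Proof. intros Hw. apply (proj2 (dA_spec _)); auto. Qed.

Lemma dA_invl_mul_le x y :
  (dA mul inv e A (mul (inv x) y) <= dA mul inv e A x + dA mul inv e A y)%nat.
Proof.
  destruct (proj1 (dA_spec x)) as [wx [Hx [<- <-]]].
  destruct (proj1 (dA_spec y)) as [wy [Hy [<- <-]]].
  assert (Hw : is_word inv A (rev (map inv wx) ++ wy)).
  { apply Forall_app. split; auto. now apply is_word_rev_map_inv. }
  pose proof (dA_eval_le _ Hw) as Hle.
  rewrite (eval_app G mul inv e HG), (eval_rev_map_inv G mul inv e HG) in Hle.
  rewrite length_app, length_rev, length_map in Hle. exact Hle.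
Qed.

Definition ball_list (n : nat) : list G :=
  nodup classic_eq_dec (map (eval mul e) (words_upto letters n)).

Lemma In_ball_list n g : In g (ball_list n) <-> ball mul inv e A n g.
Proof.
  unfold ball_list, ball. rewrite nodup_In, in_map_iff. split.
  - intros [w [<- Hw]]. apply In_words_upto in Hw. destruct Hw as [Hw Hl].
    pose proof (dA_eval_le w (proj2 (is_word_letters w) Hw)). lia.
  - intros Hb. destruct (proj1 (dA_spec g)) as [w [Hw [Hl Hev]]].
    exists w. split; auto. apply In_words_upto. split; [now apply is_word_letters|lia].
Qed.

Lemma card_ball n : card_is (ball mul inv e A n) (length (ball_list n)).
Proof. exists (ball_list n). split; [apply NoDup_nodup|split; auto using In_ball_list]. Qed.

Lemma card_filter_ball (P : G -> Prop) n :
  card_is (fun g => ball mul inv e A n g /\ P g)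
          (length (filter (fun g => asbool (P g)) (ball_list n))).
Proof.
  exists (filter (fun g => asbool (P g)) (ball_list n)).
  split; [apply NoDup_filter, NoDup_nodup|split; [reflexivity|]].
  intros g. rewrite filter_In, asboolP, In_ball_list. tauto.
Qed.

Section Language.

Variables (L : list G -> Prop) (psi : list G -> G).
Hypothesis HL : forall w, L w -> is_word inv A w.
Hypothesis Hinj : forall w1 w2, L w1 -> L w2 -> psi w1 = psi w2 -> w1 = w2.
Hypothesis Hsurj : forall g, exists w, L w /\ psi w = g.

Definition has_short_rep (c : R) (g : G) : Prop :=
  exists w, L w /\ psi w = g /\ c * INR (dA mul inv e A g) <= INR (length w).

Lemma length_no_short_rep K n : (0 < K)%nat ->
  (length (filter (fun g => negb (asbool (has_short_rep (/ INR K) g))) (ball_list n))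
   <= (length letters + 1) ^ (n / K))%nat.
Proof.
  intros HK.
  set (rep := fun g => proj1_sig (constructive_indefinite_description _ (Hsurj g))).
  assert (Hrep : forall g, L (rep g) /\ psi (rep g) = g).
  { intros g; unfold rep; destruct constructive_indefinite_description; auto. }
  eapply Nat.le_trans; [|apply length_words_upto].
  apply (length_le_of_injection rep).
  - apply NoDup_filter, NoDup_nodup.
  - intros x y _ _ Hxy. rewrite <- (proj2 (Hrep x)), <- (proj2 (Hrep y)), Hxy; auto.
  - intros g Hg. rewrite filter_In, In_ball_list in Hg. destruct Hg as [Hg Hnot].
    destruct (Hrep g) as [Lg Pg].
    apply In_words_upto. split; [apply is_word_letters; auto|].
    assert (HKr : 0 < INR K) by (apply lt_0_INR; lia).
    assert (Hshort : INR (length (rep g)) * INR K < INR (dA mul inv e A g)).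
    { apply Rnot_le_lt. intros Hle.
      enough (Hrepg : has_short_rep (/ INR K) g)
        by (apply asboolP in Hrepg; rewrite Hrepg in Hnot; discriminate).
      exists (rep g). split; [|split]; auto.
      apply Rmult_le_reg_r with (INR K); auto.
      rewrite Rmult_comm, <- Rmult_assoc, Rinv_r_simpl_r by lra. lra. }
    rewrite <- mult_INR in Hshort. apply INR_lt in Hshort.
    apply Nat.div_le_lower_bound; unfold ball in Hg; lia.
Qed.

Lemma wdist_has_short_rep_le c g w : 0 < c -> has_short_rep c g -> L w -> psi w = g ->
  INR (wdist mul inv e A (eval mul e w) (psi w)) <= (1 + 1 / c) * INR (length w).
Proof.
  intros Hc [w' [Lw' [Pw' Hle]]] Lw Pw.
  assert (w' = w) by (apply Hinj; congruence). subst w'.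
  unfold wdist. rewrite Pw.
  pose proof (le_INR _ _ (dA_invl_mul_le (eval mul e w) g)) as Htri.
  pose proof (le_INR _ _ (dA_eval_le w (HL w Lw))) as Hpi.
  rewrite plus_INR in Htri.
  assert (Hg : INR (dA mul inv e A g) <= 1 / c * INR (length w)).
  { apply Rmult_le_reg_l with c; auto. field_simplify; lra. }
  lra.
Qed.

Lemma has_short_rep_density : exp_growth mul inv e A ->
  exists K, (0 < K)%nat /\ forall eps, 0 < eps -> exists N, forall n, (N <= n)%nat ->
    Rabs (INR (length (filter (fun g => asbool (has_short_rep (/ INR K) g)) (ball_list n)))
          / INR (length (ball_list n)) - 1) < eps.
Proof.
  intros [lam [Hlam [N0 HN0]]].
  set (y := INR (length letters) + 1).
  assert (Hy : 1 <= y) by (pose proof (pos_INR (length letters)); unfold y; lra).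
  destruct (pow_ge_eventually lam (2 * y) Hlam) as [K0 HK0].
  exists (S K0). split; [lia|]. intros eps Heps.
  destruct (pow_ge_eventually 2 (2 / eps) ltac:(lra)) as [M HM].
  exists (max N0 (S K0 * M)). intros n Hn. set (m := (n / S K0)%nat).
  assert (Hball : 2 ^ m * y ^ m <= INR (length (ball_list n))).
  { rewrite <- Rpow_mult_distr.
    apply Rle_trans with (lam ^ n); [apply pow_div_le; auto; lra|].
    apply HN0; [lia|apply card_ball]. }
  assert (Hcompl : INR (length (filter (fun g => negb (asbool (has_short_rep (/ INR (S K0)) g)))
                                 (ball_list n))) <= y ^ m).
  { replace y with (INR (length letters + 1)) by (rewrite plus_INR; reflexivity).
    rewrite <- pow_INR. apply le_INR, length_no_short_rep; lia. }
  assert (H2m : 2 / eps <= 2 ^ m) by (apply HM, Nat.div_le_lower_bound; lia).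
  assert (Hym : 0 < y ^ m) by (apply pow_lt; lra).
  assert (Heps2 : 2 <= eps * 2 ^ m).
  { apply Rmult_le_reg_r with (/ eps); [apply Rinv_0_lt_compat, Heps|].
    field_simplify; lra. }
  apply complement_ratio_lt with (c := length (filter (fun g => negb (asbool
                                     (has_short_rep (/ INR (S K0)) g))) (ball_list n))).
  - apply filter_length.
  - nra.
  - apply Rmult_lt_reg_r with (INR (length (ball_list n))); [nra|].
    unfold Rdiv. rewrite Rmult_assoc, Rinv_l, Rmult_1_r by nra. nra.
Qed.

End Language.

End WordMetric.

Theorem mainTheorem14 (G : Type) (mul : G -> G -> G) (inv : G -> G) (e : G)
  (HG : group_laws G mul inv e) (A : list G)
  (Hgen : generates mul inv e A) (Hexp : exp_growth mul inv e A)
  (L : list G -> Prop) (HL : forall w, L w -> is_word inv A w)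
  (psi : list G -> G)
  (Hinj : forall w1 w2, L w1 -> L w2 -> psi w1 = psi w2 -> w1 = w2)
  (Hsurj : forall g, exists w, L w /\ psi w = g) :
  exists lam1 : R, 0 < lam1 /\
    let Q' := fun (n : nat) (g : G) =>
      ball mul inv e A n g /\
      exists w, L w /\ psi w = g /\ lam1 * INR (dA mul inv e A g) <= INR (length w) in
    (forall eps : R, 0 < eps -> exists N : nat, forall n : nat, (N <= n)%nat ->
       exists b q : nat, card_is (ball mul inv e A n) b /\ card_is (Q' n) q /\
         Rabs (INR q / INR b - 1) < eps) /\
    (forall (n : nat) (g : G), Q' n g -> forall w, L w -> psi w = g ->
       INR (wdist mul inv e A (eval mul e w) (psi w)) <= (1 + 1 / lam1) * INR (length w)).
Proof.
  destruct (has_short_rep_density G mul inv e A Hgen L psi HL Hsurj Hexp) as [K [HK Hdens]].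
  assert (HKr : 0 < / INR K) by (apply Rinv_0_lt_compat, lt_0_INR, HK).
  exists (/ INR K). split; [exact HKr|]. intro Q'. split.
  - intros eps Heps. destruct (Hdens eps Heps) as [N HN].
    exists N. intros n Hn. do 2 eexists.
    split; [apply card_ball, Hgen|split; [apply card_filter_ball, Hgen|apply HN, Hn]].
  - intros n g [_ Hrep] w Lw Pw.
    exact (wdist_has_short_rep_le G mul inv e HG A Hgen L psi HL Hinj _ g w HKr Hrep Lw Pw).
Qed.
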